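(* Let $\mathcal{N}$ be a sound, acyclic, deterministic negotiation and $B\subseteq N$, and suppose Eve has a deterministic positional winning strategy $\sigma$ in the game $G(\mathcal{N},B)$. Let $S$ be the set of nodes of $\mathcal{N}$ that are reached on some play from $n_{\mathit{init}}$ respecting $\sigma$. Then there exists a successful run of $\mathcal{N}$ whose set of occurring nodes is precisely $S$.
   Context: A negotiation is a tuple $\mathcal{N}=(\mathit{Proc},N,\mathit{dom},R,\delta)$ where $\mathit{Proc}$ is a finite set of processes, $N$ is a finite set of nodes, $\mathit{dom}:N\to 2^{\mathit{Proc}}\setminus\{\emptyset\}$, there are two distinguished nodes $n_{\mathit{init}},n_{\mathit{fin}}$ with $\mathit{dom}(n_{\mathit{init}})=\mathit{dom}(n_{\mathit{fin}})=\mathit{Proc}$, $R$ is a set of results, each node $n$ has a set $\mathit{out}(n)\subseteq R$ of results (nonempty for $n\neq n_{\mathit{fin}}$), and $\delta(n,a,p)\subseteq N$ is defined and nonempty exactly when $a\in\mathit{out}(n)$ and $p\in\mathit{dom}(n)$, with $p\in\mathit{dom}(n')$ for all $n'\in\delta(n,a,p)$. $\mathcal{N}$ is deterministic if every $\delta(n,a,p)$ is a singleton, identified with its element. A configuration is a map $C$ assigning to each process a nonempty set of nodes; $C_{\mathit{init}}(p)=\{n_{\mathit{init}}\}$, $C_{\mathit{fin}}(p)=\{n_{\mathit{fin}}\}$. A node $n$ is enabled in $C$ if $n\in C(p)$ for all $p\in\mathit{dom}(n)$. If $n$ is enabled and $a\in\mathit{out}(n)$ then $C\xrightarrow{(n,a)}C'$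 with $C'(p)=\delta(n,a,p)$ for $p\in\mathit{dom}(n)$, $C'(p)=C(p)$ otherwise. A run is a sequence $(n_1,a_1)(n_2,a_2)\cdots$ of such steps; a successful run is a finite run from $C_{\mathit{init}}$ to $C_{\mathit{fin}}$; $\mathcal{N}$ is sound if every finite run from $C_{\mathit{init}}$ can be extended to a successful run. The graph of $\mathcal{N}$ has vertex set $N$ and edges $n\to n'$ whenever $n'\in\delta(n,a,p)$ for some $a,p$; $\mathcal{N}$ is acyclic if this graph is. The two-player game $G(\mathcal{N},B)$ (players Eve and Adam) for deterministic $\mathcal{N}$ and $B\subseteq N$: Eve's positions are $N\setminus B$, Adam's positions are $N\times R$; the moves are $n\to(n,a)$ for $n\in N\setminus B$, $a\in\mathit{out}(n)$, and $(n,a)\to\delta(n,a,p)$ for $n\in N$, $a\in\mathit{out}(n)$, $p\in\mathit{dom}(n)$. The initial position is $n_{\mathit{init}}$; a play is a maximal path from it. Adam wins a play if it reaches a node of $B$; Eve wins if it reaches $n_{\mathit{fin}}$. A deterministic positional strategy for Eve is a function $\sigma:N\to R$ (with $\sigma(n)\in\mathit{out}(n)$); a play respects $\sigma$ if from each Eve position $n$ it moves to $(n,\sigma(n))$; $\sigma$ is winning if every play from $n_{\mathit{init}}$ respecting $\sigma$ is won by Eve. *)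

From HB Require Import structures.
From mathcomp Require Import all_boot.
Set Warnings "-notation-overridden".
Set Implicit Arguments. Unset Strict Implicit. Unset Printing Implicit Defensive.

Section Negotiations.
Variables (Proc N R : finType).

Record negotiation := Negotiation {
  dom   : N -> {set Proc};
  ninit : N;
  nfin  : N;
  out   : N -> {set R};
  delta : N -> R -> Proc -> {set N}
}.

Variable G : negotiation.

Definition wf_negotiation : Prop :=
  (forall n, dom G n != set0) /\
  dom G (ninit G) = setT /\
  dom G (nfin G) = setT /\
  out G (nfin G) = set0 /\
  (forall n, n != nfin G -> out G n != set0) /\
  (forall n a p, (delta G n a p != set0) = (a \in out G n) && (p \in dom G n)) /\
  (forall n a p n', n' \in delta G n a p -> p \in dom G n').

Definition deterministic : Prop :=
  forall n a p, a \in out G n -> p \in dom G n -> #|delta G n a p| = 1.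

Definition config := {ffun Proc -> {set N}}.
Definition Cinit : config := [ffun _ => [set ninit G]].
Definition Cfin  : config := [ffun _ => [set nfin G]].

Definition enabled (C : config) (n : N) : bool := [forall p in dom G n, n \in C p].

Definition next (C : config) (n : N) (a : R) : config :=
  [ffun p => if p \in dom G n then delta G n a p else C p].

Fixpoint is_run (C : config) (s : seq (N * R)) (C' : config) : Prop :=
  match s with
  | [::] => C = C'
  | (n, a) :: s' => [/\ enabled C n, a \in out G n & is_run (next C n a) s' C']
  end.

Definition successful_run (s : seq (N * R)) : Prop := is_run Cinit s Cfin.

Definition sound : Prop :=
  forall s C, is_run Cinit s C -> exists s', is_run C s' Cfin.

Definition graph_edge : rel N :=
  fun n n' => [exists a, exists p, n' \in delta G n a p].

Definition acyclic : Prop :=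
  forall n n', graph_edge n n' -> ~~ connect graph_edge n' n.

(* The game G(N, B): Eve's positions are nodes (inl n), Adam's are pairs (inr (n,a)). *)
Definition position := (N + (N * R))%type.

Definition move (B : {set N}) : rel position :=
  fun x y =>
    match x, y with
    | inl n, inr (n', a) => [&& n' == n, n \notin B & a \in out G n]
    | inr (n, a), inl n' =>
        (a \in out G n) && [exists p, (p \in dom G n) && (n' \in delta G n a p)]
    | _, _ => false
    end.

Definition strategy (sigma : N -> R) : Prop :=
  forall n, n != nfin G -> sigma n \in out G n.

Definition respects (sigma : N -> R) (x y : position) : bool :=
  if x is inl n then y == inr (n, sigma n) else true.

(* finite maximal plays from n_init respecting sigma, given as the sequence of
   positions after the initial one *)
Definition fin_play (B : {set N}) (sigma : N -> R) (s : seq position) : Prop :=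
  [/\ path (fun x y => move B x y && respects sigma x y) (inl (ninit G)) s
    & forall y, ~~ move B (last (inl (ninit G)) s) y].

Definition inf_play (B : {set N}) (sigma : N -> R) (f : nat -> position) : Prop :=
  f 0 = inl (ninit G) /\ forall i, move B (f i) (f i.+1) && respects sigma (f i) (f i.+1).

(* Eve wins a play if it reaches n_fin (and no node of B). Infinite plays never
   reach n_fin (it has no results, hence no moves), so they are not won by Eve. *)
Definition eve_wins_fin (B : {set N}) (s : seq position) : bool :=
  (inl (nfin G) \in inl (ninit G) :: s)
  && all (fun x => if x is inl n then n \notin B else true) (inl (ninit G) :: s).

Definition winning (B : {set N}) (sigma : N -> R) : Prop :=
  strategy sigma /\
  (forall s, fin_play B sigma s -> eve_wins_fin B s) /\
  (forall f, ~ inf_play B sigma f).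

Definition reached (B : {set N}) (sigma : N -> R) (n : N) : Prop :=
  (exists s, fin_play B sigma s /\ inl n \in inl (ninit G) :: s) \/
  (exists f, inf_play B sigma f /\ exists i, f i = inl n).

End Negotiations.

(* Acyclicity ranks every node by the number of its descendants, and the rank
   strictly decreases along edges.  Hence every play respecting sigma is
   finite, and the nodes reached by sigma are exactly those generated from
   n_init by firing sigma at non-final nodes; as sigma is winning, none of
   them lies in B.  The run is built greedily: while every process sits on a
   single sigma-reached node, soundness says that either the configuration is
   final or some node is enabled, and that node is then sigma-reached, so we
   fire it with its sigma-result.  Firing lowers the sum of the ranks of the
   current nodes, so we end in C_fin.  Each sigma-reached node other than
   n_fin occurs in the run, because some process must eventually leave it. *)
From Pilot Require Import Defs.
From HB Require Import structures.
From mathcomp Require Import all_boot.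
From mathcomp Require Import zify.
Set Implicit Arguments. Unset Strict Implicit. Unset Printing Implicit Defensive.

Lemma ltn_sum_pointwise (I : finType) (E1 E2 : I -> nat) (i0 : I) :
  (forall i, E1 i <= E2 i) -> E1 i0 < E2 i0 -> \sum_i E1 i < \sum_i E2 i.
Proof.
move=> le12 lt0; rewrite (bigD1 i0) // [X in _ < X](bigD1 i0) //=.
have : \sum_(i | i != i0) E1 i <= \sum_(i | i != i0) E2 i by exact: leq_sum.
lia.
Qed.

Section Rank.
Variables (T : finType) (e : rel T).
Hypothesis e_acyclic : forall x y, e x y -> ~~ connect e y x.

Definition rank (x : T) := #|[set y | connect e x y]|.

Lemma rank_edge_lt x y : e x y -> rank y < rank x.
Proof.
move=> exy; apply/proper_card/properP; split.
  by apply/subsetP => z; rewrite !inE; apply: connect_trans (connect1 exy).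
by exists x; rewrite !inE ?connect0 //; apply: e_acyclic.
Qed.

End Rank.

Section Negotiation.
Variables (Proc N R : finType) (G : negotiation Proc N R).

Lemma graph_edge_delta n a p n' : n' \in delta G n a p -> graph_edge G n n'.
Proof. by move=> H; apply/existsP; exists a; apply/existsP; exists p. Qed.

Lemma is_run_cat C s1 s2 C' :
  is_run G C (s1 ++ s2) C' <-> exists C1, is_run G C s1 C1 /\ is_run G C1 s2 C'.
Proof.
elim: s1 C => [|[n a] s1 IH] C /=; first by split => [|[C1 [-> //]]]; exists C.
split; first by case=> en ao /IH [C1 [H1 H2]]; exists C1.
by case=> C1 [[en ao H1] H2]; split => //; apply/IH; exists C1.
Qed.

Lemma is_run_leave C s C' p m :
  is_run G C s C' -> C p = [set m] -> C' p != [set m] -> m \in [seq x.1 | x <- s].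
Proof.
elim: s C => [|[n a] s IH] C /=; first by move=> -> ->; rewrite eqxx.
case=> en ao run_s Cp C'p; rewrite inE.
case: (boolP (p \in dom G n)) => pd.
  by move/forall_inP: en => /(_ p pd); rewrite Cp inE eq_sym => ->.
by rewrite (IH _ run_s _ C'p) ?orbT // ffunE (negbTE pd).
Qed.

Hypothesis G_wf : wf_negotiation G.

Lemma dom_neq0 n : dom G n != set0.
Proof. by case: G_wf. Qed.

Lemma out_neq_fin n a : a \in out G n -> n != nfin G.
Proof.
by case: G_wf => _ [_ [_ [out_fin _]]]; apply: contraTneq => ->; rewrite out_fin inE.
Qed.

Section Strategy.
Variables (B : {set N}) (sigma : N -> R).
Hypotheses (G_acyclic : acyclic G) (sigma_winning : winning G B sigma).

Lemma sigma_out n : n != nfin G -> sigma n \in out G n.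
Proof. by case: sigma_winning => H _; apply: H. Qed.

Let play_step (x y : position N R) := move G B x y && respects sigma x y.

(* An Adam position (n, a) lies strictly between n and the successors of n. *)
Let potential (x : position N R) :=
  match x with
  | inl m => (rank (graph_edge G) m).*2.+1
  | inr (m, _) => (rank (graph_edge G) m).*2
  end.

Lemma play_step_potential x y :
  move G B x y -> exists2 y', play_step x y' & potential y' < potential x.
Proof.
case: x => [m|[m a]]; case: y => [m'|[m' a']] //=.
  case/and3P => _ mB ao; exists (inr (m, sigma m)); last by rewrite /= ltnSn.
  by rewrite /play_step /= eqxx mB sigma_out ?(out_neq_fin ao) //= eqxx.
case/andP => ao /existsP [p /andP [pd m'D]]; exists (inl m').
  by rewrite /play_step /= ao andbT; apply/existsP; exists p; rewrite pd m'D.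
have := rank_edge_lt G_acyclic (graph_edge_delta m'D); rewrite /=; lia.
Qed.

Lemma maximal_play_from x :
  exists t, path play_step x t /\ forall y, ~~ move G B (last x t) y.
Proof.
have [k] := ubnP (potential x); elim: k x => [//|k IH] x ltxk.
have [/existsP [y /play_step_potential [y' xy' lt']]|] :=
  boolP [exists y, move G B x y].
  have [|t [pt lt]] := IH y'; first by lia.
  by exists (y' :: t); rewrite /= xy' pt.
by rewrite negb_exists => /forallP stuck; exists [::].
Qed.

Inductive sigma_reach : N -> Prop :=
| sigma_reach_init : sigma_reach (ninit G)
| sigma_reach_step m p m' : sigma_reach m -> m \notin B -> m != nfin G ->
    p \in dom G m -> m' \in delta G m (sigma m) p -> sigma_reach m'.

Lemma sigma_reach_play n :
  sigma_reach n -> exists s, fin_play G B sigma s /\ inl n \in inl (ninit G) :: s.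
Proof.
have prefix : sigma_reach n ->
    exists2 s, path play_step (inl (ninit G)) s & last (inl (ninit G)) s = inl n.
  elim=> [|m p m' _ [s ps ls] mB mf pd m'D]; first by exists [::].
  exists (rcons (rcons s (inr (m, sigma m))) (inl m')).
    rewrite !rcons_path last_rcons ps ls /play_step /= eqxx mB sigma_out //= eqxx andbT.
    by apply/existsP; exists p; rewrite pd m'D.
  by rewrite last_rcons.
case/prefix=> s ps ls; have [t [pt lt]] := maximal_play_from (inl n).
exists (s ++ t); split; first split.
- by rewrite cat_path ps ls.
- by rewrite last_cat ls.
by rewrite -cat_cons mem_cat -ls mem_last.
Qed.

Lemma sigma_reach_notin_B n : sigma_reach n -> n \notin B.
Proof.
case/sigma_reach_play=> s [play ns]; case: sigma_winning => _ [win _].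
by case/andP: (win s play) => _ /allP /(_ _ ns).
Qed.

Let sigma_reach_pos (x : position N R) :=
  match x with
  | inl m => sigma_reach m
  | inr (m, a) => [/\ a = sigma m, sigma_reach m, m \notin B & m != nfin G]
  end.

Lemma sigma_reach_pos_step x y : sigma_reach_pos x -> play_step x y -> sigma_reach_pos y.
Proof.
rewrite /play_step; case: x => [m|[m a]]; case: y => [m'|[m' a']] //=.
  move=> Rm /andP [/and3P [/eqP -> mB ao] /eqP [->]].
  by split=> //; apply: out_neq_fin ao.
move=> [-> Rm mB mf] /andP [/andP [_ /existsP [p /andP [pd m'D]]] _].
exact: sigma_reach_step Rm mB mf pd m'D.
Qed.

Lemma sigma_reach_pos_path x s :
  sigma_reach_pos x -> path play_step x s -> {in x :: s, forall y, sigma_reach_pos y}.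
Proof.
elim: s x => [|z s IH] x Rx /=; first by move=> _ y; rewrite inE => /eqP ->.
case/andP=> xz ps y; rewrite inE => /predU1P [-> //|].
exact: IH (sigma_reach_pos_step Rx xz) ps y.
Qed.

Lemma reached_iff_sigma_reach n : reached G B sigma n <-> sigma_reach n.
Proof.
split; last by move=> Rn; left; apply: sigma_reach_play.
case=> [[s [[ps _] ns]]|[f [[f0 stepf] [i fi]]]].
  exact: (sigma_reach_pos_path (x := inl (ninit G)) sigma_reach_init ps ns).
have : sigma_reach_pos (f i).
  elim: i {fi} => [|i IH]; first by rewrite f0; apply: sigma_reach_init.
  exact: sigma_reach_pos_step IH (stepf i).
by rewrite fi.
Qed.

Lemma sigma_reach_fin : sigma_reach (nfin G).
Proof.
apply/reached_iff_sigma_reach; have [t [pt lt]] := maximal_play_from (inl (ninit G)).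
left; exists t; split => //; case: sigma_winning => _ [win _].
by case/andP: (win t (conj pt lt)).
Qed.

Hypotheses (G_sound : sound G) (G_deterministic : deterministic G).

Lemma delta_sigma1 n p :
  n != nfin G -> p \in dom G n -> exists m, delta G n (sigma n) p = [set m].
Proof. by move=> nf pd; apply/cards1P; rewrite G_deterministic // sigma_out. Qed.

Let sigma_config (C : config Proc N) := forall p, exists2 m, C p = [set m] & sigma_reach m.

Let config_rank (C : config Proc N) := \sum_p \sum_(m in C p) rank (graph_edge G) m.

Lemma sigma_config_fire C n :
  sigma_config C -> enabled G C n -> sigma_reach n -> n != nfin G ->
  sigma_config (Defs.next G C n (sigma n)) /\
  config_rank (Defs.next G C n (sigma n)) < config_rank C.
Proof.
move=> sC en Rn nf; have Cn p : p \in dom G n -> C p = [set n].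
  move=> pd; case: (sC p) => m Cp _; move/forall_inP: en => /(_ p pd).
  by rewrite Cp inE => /eqP ->.
split=> [p|]; rewrite /Defs.next.
  rewrite ffunE; case: ifP => pd; last exact: sC.
  have [m Dm] := delta_sigma1 nf pd; exists m => //.
  by apply: sigma_reach_step Rn (sigma_reach_notin_B Rn) nf pd _; rewrite Dm inE.
have rank_delta p : p \in dom G n ->
    \sum_(m in delta G n (sigma n) p) rank (graph_edge G) m
      < \sum_(m in C p) rank (graph_edge G) m.
  move=> pd; have [m Dm] := delta_sigma1 nf pd; rewrite Dm Cn // !big_set1.
  apply/(rank_edge_lt G_acyclic)/(graph_edge_delta (a := sigma n) (p := p)).
  by rewrite Dm inE.
have [p pd] := set0Pn _ (dom_neq0 n).
apply: (ltn_sum_pointwise (i0 := p)) => [q|]; rewrite ffunE; last by rewrite pd rank_delta.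
by case: ifP => qd //; apply/ltnW/rank_delta.
Qed.

Lemma sigma_config_fin_or_enabled C s0 :
  sigma_config C -> is_run G (Cinit G) s0 C ->
  C = Cfin G \/ exists n, [/\ enabled G C n, sigma_reach n & n != nfin G].
Proof.
move=> sC run0; have [[|[n a] s] /=] := G_sound run0; first by left.
case=> en ao _; right; exists n; split=> //; last exact: out_neq_fin ao.
have [p pd] := set0Pn _ (dom_neq0 n); case: (sC p) => m Cp Rm.
by move/forall_inP: en => /(_ p pd); rewrite Cp inE => /eqP ->.
Qed.

Lemma sigma_config_run C s0 :
  sigma_config C -> is_run G (Cinit G) s0 C ->
  exists s, is_run G C s (Cfin G) /\ {in s, forall x, x.2 = sigma x.1 /\ sigma_reach x.1}.
Proof.
have [k] := ubnP (config_rank C); elim: k C s0 => [//|k IH] C s0 ltCk sC run0.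
case: (sigma_config_fin_or_enabled sC run0) => [->|[n [en Rn nf]]]; first by exists [::].
have [sC' lt'] := sigma_config_fire sC en Rn nf.
have run0' : is_run G (Cinit G) (s0 ++ [:: (n, sigma n)]) (Defs.next G C n (sigma n)).
  by apply/is_run_cat; exists C; split=> //=; rewrite sigma_out.
have [s [run Es]] := IH _ _ (leq_trans lt' ltCk) sC' run0'.
exists ((n, sigma n) :: s); split; first by split=> //; rewrite sigma_out.
by move=> x; rewrite inE => /predU1P [-> //|]; apply: Es.
Qed.

Lemma sigma_reach_fired s :
  successful_run G s -> {in s, forall x, x.2 = sigma x.1} ->
  forall n, sigma_reach n -> n != nfin G -> n \in [seq x.1 | x <- s].
Proof.
move=> run Es n; have fin_neq p m : m != nfin G -> Cfin G p != [set m].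
  move=> mf; rewrite ffunE; apply: contra_neq mf => /setP /(_ (nfin G)).
  by rewrite !inE eqxx eq_sym => /esym /eqP.
elim=> [|m p m' _ IH _ mf pd m'D] m'f.
  have [p _] := set0Pn _ (dom_neq0 (ninit G)).
  by apply: (is_run_leave (p := p) run); [rewrite ffunE | apply: fin_neq].
have /mapP [[m0 a] ms /= Em] := IH mf; subst m0.
have /= Ea := Es _ ms; subst a.
move: run; case/splitPr: ms => s1 s2 /is_run_cat [C1 [_ [_ _ run2]]].
rewrite map_cat mem_cat /= !inE (is_run_leave run2 _ (fin_neq p m' m'f)) ?orbT //.
have [z Dz] := delta_sigma1 mf pd; move: m'D; rewrite Dz inE => /eqP ->.
by rewrite ffunE pd.
Qed.

Lemma sigma_successful_run :
  exists s, successful_run G s /\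
    forall n, (n \in [seq x.1 | x <- s]) || (n == nfin G) <-> sigma_reach n.
Proof.
have sC0 : sigma_config (Cinit G).
  by move=> p; exists (ninit G); rewrite ?ffunE //; apply: sigma_reach_init.
have [s [run Es]] := sigma_config_run sC0 (erefl : is_run G (Cinit G) [::] (Cinit G)).
exists s; split=> // n; split.
  case/orP=> [/mapP [x xs ->]|/eqP ->]; [exact: (Es x xs).2 | exact: sigma_reach_fin].
move=> Rn; have [->|nf] := eqVneq n (nfin G); first by rewrite orbT.
by rewrite (sigma_reach_fired run _ Rn nf) // => x /Es [].
Qed.

End Strategy.
End Negotiation.

Theorem lemma4p3 (Proc N R : finType) (G : negotiation Proc N R)
  (B : {set N}) (sigma : N -> R) :
  wf_negotiation G -> sound G -> acyclic G -> deterministic G ->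
  winning G B sigma ->
  exists s : seq (N * R),
    successful_run G s /\
    (forall n : N, (n \in [seq x.1 | x <- s]) || (n == nfin G) <-> reached G B sigma n).
Proof.
move=> wf snd acy det win.
have [s [run Es]] := sigma_successful_run wf acy win snd det.
exists s; split=> // n; apply: iff_trans (Es n) _.
exact: iff_sym (reached_iff_sigma_reach wf acy win n).
Qed.
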